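(* The $K$-linear map $\Phi:H\to (K\oplus KY)^{2g+1}$, $\Phi(m_c)=\big(b^{\lambda_i}_{0,0}+Y\,b^{\lambda_i}_{1,0}\big)_{i=1,\dots,2g+1}$, which records the constant terms of the local components of $m_c$ at the finite points $\lambda_1,\dots,\lambda_{2g+1}$, is injective.
   Context: Standing setup. Let $k$ be a finite field of odd characteristic $p$, $W(k)$ its ring of Witt vectors, $K$ the fraction field of $W(k)$, $|\cdot|$ the $p$-adic absolute value. Let $g\ge1$ and let $\lambda_1,\dots,\lambda_{2g+1}\in W(k)$ have pairwise distinct reductions modulo $p$. Put $Q(t)=\prod_{i=1}^{2g+1}(t-\lambda_i)$ and $h(t)=\frac{Q'(t)}{2Q(t)}$. Let $\Lambda=\{\lambda_1,\dots,\lambda_{2g+1},\infty\}$, $\Lambda_0=\Lambda\setminus\{\infty\}$. The local parameter at $\lambda\in\Lambda_0$ is $s_\lambda=t-\lambda$, and at $\infty$ it is $s_\infty=t^{-1}$. Let $B_K^\dagger$ be the ring of series $\sum_{\underline\ell\ge0}a_{\underline\ell}\,t^{\ell_0}\prod_{i}(t-\lambda_i)^{-\ell_i}$ ($a_{\underline\ell}\in K$) for which there is $\eta>1$ with $|a_{\underline\ell}|\eta^{\max_i\ell_i}\to0$; $\phi_\lambda(f)$ is the Laurent expansion of $f\in B_K^\dagger$ in $s_\lambda$. The principal part is $\Pr_\lambda(\sum a_\ell s_\lambda^\ell)=\sum_{\ell<0}a_\ell s_\lambda^\ell$ for $\lambda\in\Lambda_0$ and $\Pr_\infty(\sum a_\ell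 s_\infty^\ell)=\sum_{\ell\le0}a_\ell s_\infty^\ell$; its expansion at another point $\mu$ is denoted $\phi_\mu(\cdot)$. For $\lambda\in\Lambda_0$, $\tilde R_{\lambda,c}$ is the space of $\sum_{\ell\ge0}a_\ell s_\lambda^\ell$ with $|a_\ell|\eta^\ell\to0$ for all $\eta<1$, and $R_{\infty,c}$ the analogous space of $\sum_{\ell\ge1}a_\ell s_\infty^\ell$. $B_c=\prod_{\lambda\in\Lambda_0}\tilde R_{\lambda,c}\times R_{\infty,c}$ is a $B_K^\dagger$-module via $(f\cdot G)^\mu=\phi_\mu(f)G^\mu-\sum_{\lambda\in\Lambda}\phi_\mu\big(\Pr_\lambda(\phi_\lambda(f)G^\lambda)\big)$. Let $A_K^\dagger=B_K^\dagger\oplus B_K^\dagger Y$ with $Y^2=Q(t)$, $\nabla_{GM}(1)=0$, $\nabla_{GM}(Y)=hY$; $M_c=A_K^\dagger\otimes_{B_K^\dagger}B_c$ with elements $m_c=1\otimes G_0+Y\otimes G_1$ ($G_0,G_1\in B_c$) and $\nabla_c(m_c)=1\otimes\partial_tG_0+Y\otimes(\partial_tG_1+h\cdot G_1)$, $\partial_t$ acting componentwise (as $-s_\infty^2\,d/ds_\infty$ on series in $s_\infty$). $H=\ker\nabla_c$ (the space $H^1_{MW,c}(V,\pi_*A_K^\dagger)$). Local components: $m_\lambda=G_0^\lambda+YG_1^\lambda=\sum_{j=0,1}Y^j\sum_{\ell\ge0}b^\lambda_{j,\ell}s_\lambda^\ell$ with $b^\infty_{j,0}=0$. *)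

From HB Require Import structures.
From mathcomp Require Import all_boot all_order all_algebra.
Set Implicit Arguments. Unset Strict Implicit. Unset Printing Implicit Defensive.
Import Order.TTheory GRing.Theory Num.Theory.
Local Open Scope ring_scope.

(* The base field K = Frac W(k), given axiomatically (Cohen structure   *)
(* theorem): a field with a rational-valued absolute value which is     *)
(* the normalized p-adic one (|p| = 1/p), non-archimedean, complete,    *)
(* discrete with uniformizer p (unramified), whose residue field        *)
(* k = W/pW (W = {|x| <= 1}) is finite, p an odd prime.                 *)
Definition padic_setting (K : fieldType) (abs : K -> rat) (p : nat) : Prop :=
  (prime p /\ odd p) /\
  (forall x, 0 <= abs x) /\ (forall x, abs x = 0 <-> x = 0) /\
  (forall x y, abs (x * y) = abs x * abs y) /\
  (forall x y, abs (x + y) <= Num.max (abs x) (abs y)) /\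
  (* normalized p-adic absolute value; p is a uniformizer (unramified) *)
  abs (p%:R) = (p%:R)^-1 /\
  (forall x, abs x < 1 -> exists w, abs w <= 1 /\ x = p%:R * w) /\
  (forall u : nat -> K,
      (forall eps : rat, 0 < eps -> exists N, forall m n, (N <= m)%N -> (N <= n)%N ->
          abs (u m - u n) < eps) ->
      exists l, forall eps : rat, 0 < eps -> exists N, forall n, (N <= n)%N ->
          abs (u n - l) < eps) /\
  (* the residue field k = W/pW is finite *)
  (exists s : seq K, forall x, abs x <= 1 ->
      exists r, r \in s /\ exists w, abs w <= 1 /\ x - r = p%:R * w).

Definition inW (K : fieldType) (abs : K -> rat) (x : K) := abs x <= 1.
Definition same_red (K : fieldType) (abs : K -> rat) (p : nat) (x y : K) :=
  exists w, abs w <= 1 /\ x - y = p%:R * w.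

(* Laurent series in a local parameter s: a pair (d, a) represents      *)
(* sum_{k>=0} a_k s^(k-d).                                               *)
Section Laurent.
Variable K : fieldType.

Definition laur := (nat * (nat -> K))%type.

Definition lcoef (L : laur) (e : int) : K :=
  match (e + (L.1)%:Z)%R with Posz k => L.2 k | Negz _ => 0 end.

Definition lzero : laur := (0%N, fun _ => 0).
Definition lone : laur := (0%N, fun k => (k == 0%N)%:R).
Definition lser (a : nat -> K) : laur := (0%N, a).
Definition lscale (c : K) (L : laur) : laur := (L.1, fun k => c * L.2 k).
Definition ladd (L1 L2 : laur) : laur :=
  let D := maxn L1.1 L2.1 in
  (D, fun k => (if (D - L1.1 <= k)%N then L1.2 (k - (D - L1.1))%N else 0)
             + (if (D - L2.1 <= k)%N then L2.2 (k - (D - L2.1))%N else 0)).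
Definition lmul (L1 L2 : laur) : laur :=
  ((L1.1 + L2.1)%N, fun k => \sum_(i < k.+1) L1.2 i * L2.2 (k - i)%N).
Definition lpow (L : laur) (k : nat) : laur := iter k (lmul L) lone.
Definition lsum (s : seq laur) : laur := foldr ladd lzero s.

End Laurent.

(* Points of Lambda: Some i = lambda_i (i : 'I_n), None = infinity.     *)
Section Setting.
Variables (K : fieldType) (n : nat) (lam : 'I_n -> K).

Definition pt := option 'I_n.

Definition phi_t (mu : pt) : laur K :=
  match mu with
  | Some j => (0%N, fun k => if k == 0%N then lam j else (k == 1%N)%:R)
  | None => (1%N, fun k => (k == 0%N)%:R)          (* t = s_inf^-1 *)
  end.

(* phi_mu((t - lambda_i)^-1) *)
Definition phi_recip (mu : pt) (i : 'I_n) : laur K :=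
  match mu with
  | Some j => if j == i then (1%N, fun k => (k == 0%N)%:R)
              else (0%N, fun l => (-1) ^+ l * (lam j - lam i) ^- l.+1)
  | None => (0%N, fun k => if k is k'.+1 then lam i ^+ k' else 0)
  end.

(* Elements of B_K^dagger that are finite sums of the defining monomials:
   (c, l0, l) stands for c * t^l0 * prod_i (t - lambda_i)^(-l_i). *)
Definition bfin := seq (K * nat * ('I_n -> nat)).

Definition phi (mu : pt) (f : bfin) : laur K :=
  lsum [seq lscale m.1.1
          (lmul (lpow (phi_t mu) m.1.2)
                (foldr (fun i L => lmul (lpow (phi_recip mu i) (m.2 i)) L)
                       (lone K) (enum 'I_n)))
       | m <- f].

(* phi_mu(s_lambda^-1) : s_lambda^-1 = (t-lambda)^-1, resp. t at infinity *)
Definition phi_sinv (mu lambda : pt) : laur K :=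
  match lambda with Some i => phi_recip mu i | None => phi_t mu end.

(* phi_mu(Pr_lambda(F)) for a Laurent series F in s_lambda:
   Pr_lambda keeps exponents < 0 (finite lambda), resp. <= 0 (infinity). *)
Definition phi_Pr (mu lambda : pt) (F : laur K) : laur K :=
  let lo := if lambda is Some _ then 1%N else 0%N in
  lsum [seq lscale (F.2 (F.1 - k)%N) (lpow (phi_sinv mu lambda) k)
       | k <- iota lo (F.1.+1 - lo)].

(* B_c-components : G mu = coefficient sequence of G^mu in s_mu *)
Definition bcomp := pt -> nat -> K.

(* (f . G)^mu, as coefficient function of the exponent *)
Definition act (f : bfin) (G : bcomp) (mu : pt) (e : int) : K :=
  lcoef (lmul (phi mu f) (lser (G mu))) e
  - \sum_(lambda : pt) lcoef (phi_Pr mu lambda (lmul (phi lambda f) (lser (G lambda)))) e.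

(* partial_t componentwise: d/ds at finite points, -s^2 d/ds at infinity *)
Definition dser (mu : pt) (a : nat -> K) (e : int) : K :=
  match mu, e with
  | Some _, Posz k => k.+1%:R * a k.+1
  | None, Posz k.+1 => - (k%:R * a k)
  | _, _ => 0
  end.

(* h = Q'/(2Q) = (1/2) sum_i (t - lambda_i)^-1 as an element of B_K^dagger *)
Definition hB : bfin :=
  [seq ((2%:R)^-1, 0%N, fun j => (i == j : nat)) | i <- enum 'I_n].

Definition conv_open (abs : K -> rat) (a : nat -> K) :=
  forall eta : rat, 0 < eta < 1 ->
    forall eps : rat, 0 < eps -> exists N, forall l, (N <= l)%N ->
      abs (a l) * eta ^+ l < eps.

Definition inBc (abs : K -> rat) (G : bcomp) :=
  (forall mu, conv_open abs (G mu)) /\ G None 0%N = 0.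

(* m_c = 1 (x) G0 + Y (x) G1 lies in H = ker nabla_c *)
Definition inH (abs : K -> rat) (G0 G1 : bcomp) :=
  [/\ inBc abs G0, inBc abs G1 &
      forall mu e, dser mu (G0 mu) e = 0 /\ dser mu (G1 mu) e + act hB G1 mu e = 0].

(* Phi(m_c)_i = b^{lambda_i}_{0,0} + Y b^{lambda_i}_{1,0}, as a pair *)
Definition PhiMap (G0 G1 : bcomp) (i : 'I_n) : K * K :=
  (G0 (Some i) 0%N, G1 (Some i) 0%N).

End Setting.

(* Phi is linear, so we show that two elements m_c = 1 (x) G0 + Y (x) G1 and
   m_c' = 1 (x) G0' + Y (x) G1' of H with the same constant terms at the
   finite points lambda_i coincide.  Membership in H means, at every point
   mu, that  d_t G0^mu = 0  and  d_t G1^mu + (h . G1)^mu = 0.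
   - Flat part: in characteristic 0, d_t G0^mu = 0 kills every non-constant
     coefficient, and the constant term at infinity is 0 in B_c; hence G0 is
     determined by its constant terms at the lambda_i.
   - Horizontal part: (h . G1)^mu is phi_mu(h) G1^mu minus a sum of principal
     parts.  Since h has simple poles at the lambda_i and vanishes at infinity,
     these principal parts only involve the constant terms of G1, so the
     equation at mu is a linear recurrence for the coefficients of G1^mu whose
     leading coefficient is (k+1) + 1/2 at a finite point and (2g+1)/2 - (k+1)
     at infinity.  Both are nonzero in characteristic 0 (the second as 2g+1 is
     odd), so G1 too is determined by its constant terms. *)

From HB Require Import structures.
From mathcomp Require Import all_boot all_order all_algebra.
From mathcomp Require Import zify.
From Stdlib Require Import FunctionalExtensionality.
Set Implicit Arguments.
Unset Strict Implicit.
Unset Printing Implicit Defensive.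
Import Order.TTheory GRing.Theory Num.Theory.
Local Open Scope ring_scope.

Section LaurentCoefficients.
Variable K : fieldType.
Implicit Types (L : laur K) (f : nat -> K).

Lemma lcoef_pos L (m : nat) : lcoef L (Posz m) = L.2 (m + L.1)%N.
Proof. by rewrite /lcoef -PoszD. Qed.

Lemma lcoef_neg1 L : lcoef L (Negz 0) = if (0 < L.1)%N then L.2 L.1.-1 else 0.
Proof.
by rewrite /lcoef; case: L => [[|d] f] //=; rewrite subn1.
Qed.

(* Padding a series with s leading zeros and raising its pole order by s
   leaves the series unchanged; this is how [ladd] aligns its summands. *)
Lemma lcoef_pad (d s : nat) f e : (s <= d)%N ->
  lcoef (d, fun k => if (s <= k)%N then f (k - s)%N else 0) e = lcoef ((d - s)%N, f) e.
Proof.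
move=> hsd; rewrite /lcoef /= -{1}(subnK hsd) PoszD addrA.
case: (e + (d - s)%N%:Z) => m.
  by rewrite -PoszD leq_addl addnK.
case E: (Negz m + s%:Z) => [k|] //.
by have -> : (s <= k)%N = false by apply/negbTE; rewrite -ltnNge; lia.
Qed.

Lemma lcoef_ladd L1 L2 e : lcoef (ladd L1 L2) e = lcoef L1 e + lcoef L2 e.
Proof.
case: L1 L2 => [d1 f1] [d2 f2]; rewrite /ladd /=.
set D := maxn d1 d2.
have -> : forall (F1 F2 : nat -> K),
    lcoef (D, fun k => F1 k + F2 k) e = lcoef (D, F1) e + lcoef (D, F2) e.
  by move=> F1 F2; rewrite /lcoef /=; case: (e + _) => //; rewrite addr0.
by rewrite !lcoef_pad ?leq_subr // !subKn ?leq_maxl ?leq_maxr.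
Qed.

Lemma lcoef_lscale c L e : lcoef (lscale c L) e = c * lcoef L e.
Proof. by rewrite /lcoef /=; case: (e + _) => //; rewrite mulr0. Qed.

Lemma lcoef_lsum (s : seq (laur K)) e :
  lcoef (lsum s) e = \sum_(L <- s) lcoef L e.
Proof.
elim: s => [|L s IH]; first by rewrite big_nil /lcoef; case: (e + _).
by rewrite big_cons /= lcoef_ladd IH.
Qed.

Lemma lsum_order (s : seq (laur K)) : (lsum s).1 = \max_(L <- s) L.1.
Proof. by elim: s => [|L s IH]; rewrite ?big_nil ?big_cons //= IH. Qed.

Lemma lmul1l L : lmul (lone K) L = L.
Proof.
case: L => d f; rewrite /lmul /= add0n; congr pair.
apply: functional_extensionality => k.
by rewrite big_ord_recl /= subn0 mul1r big1 ?addr0 // => i _; rewrite mul0r.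
Qed.

Lemma lmul1r L : lmul L (lone K) = L.
Proof.
case: L => d f; rewrite /lmul /= addn0; congr pair.
apply: functional_extensionality => k.
rewrite big_ord_recr /= subnn mulr1 big1 ?add0r // => i _.
by rewrite subn_eq0 leqNgt ltn_ord mulr0.
Qed.

Lemma prod_indicator_pow (I : eqType) (X : I -> laur K) i (s : seq I) :
  uniq s ->
  foldr (fun j L => lmul (lpow (X j) (i == j : nat)) L) (lone K) s
  = if i \in s then X i else lone K.
Proof.
elim: s => //= j s IH /andP[hj /IH ->]; rewrite in_cons.
have [->|nij] := eqVneq i j; last by rewrite lmul1l.
by rewrite (negbTE hj) /lpow /= !lmul1r.
Qed.

End LaurentCoefficients.

Section ExpansionOfH.
Variables (K : fieldType) (n : nat) (lam : 'I_n -> K).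
Local Notation hexp mu := (phi lam mu (hB K n)).

Lemma phi_hB mu :
  hexp mu = lsum [seq lscale 2^-1 (phi_recip lam mu i) | i <- enum 'I_n].
Proof.
rewrite /phi /hB -map_comp; congr lsum; apply: eq_map => i /=.
by rewrite lmul1l prod_indicator_pow ?enum_uniq // mem_enum.
Qed.

Lemma lcoef_hexp mu e :
  lcoef (hexp mu) e = 2^-1 * \sum_i lcoef (phi_recip lam mu i) e.
Proof.
rewrite phi_hB lcoef_lsum big_map big_enum mulr_sumr /=.
by apply: eq_bigr => i _; exact: lcoef_lscale.
Qed.

Lemma hexp_order_some j : (hexp (Some j)).1 = 1%N.
Proof.
have order_recip i : (phi_recip lam (Some j) i).1 = (j == i : nat).
  by rewrite /=; case: eqP.
rewrite phi_hB lsum_order big_map big_enum /= (bigD1 j) //= order_recip eqxx.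
by rewrite big1 ?maxn0 // => i nij; rewrite order_recip eq_sym (negbTE nij).
Qed.

Lemma hexp_order_none : (hexp None).1 = 0%N.
Proof. by rewrite phi_hB lsum_order big_map big1. Qed.

Lemma hexp_residue j : (hexp (Some j)).2 0%N = 2^-1.
Proof.
have := lcoef_neg1 (hexp (Some j)); rewrite hexp_order_some /= => <-.
rewrite lcoef_hexp (bigD1 j) //= eqxx big1 ?addr0 ?mulr1 // => i nij.
by rewrite eq_sym (negbTE nij).
Qed.

Lemma hexp_none_low : (hexp None).2 0%N = 0 /\ (hexp None).2 1%N = 2^-1 *+ n.
Proof.
have coef m : (hexp None).2 m = lcoef (hexp None) (Posz m).
  by rewrite lcoef_pos hexp_order_none addn0.
rewrite !coef !lcoef_hexp big1 ?mulr0 //; split=> //.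
by rewrite (eq_bigr (fun _ => 1)) ?sumr_const ?card_ord ?mulr_natr.
Qed.

(* The local part  a |-> d_t a + phi_mu(h) a  of the horizontality operator;
   its coefficients give the recurrences below. *)
Definition local_op (mu : pt n) (a : nat -> K) (e : int) : K :=
  dser mu a e + lcoef (lmul (hexp mu) (lser a)) e.

Lemma local_op_some j a k :
  local_op (Some j) a (Posz k) = (k.+1%:R + 2^-1) * a k.+1
    + \sum_(i < k.+1) (hexp (Some j)).2 i.+1 * a (k - i)%N.
Proof.
rewrite /local_op lcoef_pos /= hexp_order_some addn0 addn1.
rewrite big_ord_recl /= subn0 hexp_residue mulrDl addrA.
by congr (_ + _); apply: eq_bigr => i _; rewrite subSS.
Qed.

Lemma local_op_none a k :
  local_op None a (Posz k.+2) = (2^-1 *+ n - k.+1%:R) * a k.+1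
    + \sum_(i < k.+1) (hexp None).2 i.+2 * a (k - i)%N.
Proof.
have [h0 h1] := hexp_none_low.
rewrite /local_op lcoef_pos /= hexp_order_none !addn0.
rewrite 2!big_ord_recl /= subn0 h0 mul0r add0r subSS subn0 h1.
rewrite addrA mulrBl [- _ + _]addrC.
by congr (_ + _); apply: eq_bigr => i _; rewrite /bump /= !add1n !subSS.
Qed.

Lemma phi_Pr_lmul_const mu l (F : laur K) a a' :
  (F.1 <= (if l is Some _ then 1 else 0))%N -> a 0%N = a' 0%N ->
  phi_Pr lam mu l (lmul F (lser a)) = phi_Pr lam mu l (lmul F (lser a')).
Proof.
rewrite /phi_Pr /= addn0 => hF ha; congr lsum; apply/eq_in_map => k.
rewrite mem_iota => /andP[hk _].
have -> : (F.1 - k = 0)%N.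
  by apply/eqP; rewrite subn_eq0; apply: leq_trans hF _; case: l hk.
by rewrite !big_ord1 ha.
Qed.

Definition pp_correction (G : bcomp K n) (mu : pt n) (e : int) : K :=
  \sum_(l : pt n) lcoef (phi_Pr lam mu l (lmul (hexp l) (lser (G l)))) e.

Lemma pp_correction_const (G G' : bcomp K n) :
  (forall l, G l 0%N = G' l 0%N) -> pp_correction G = pp_correction G'.
Proof.
move=> hG; apply: functional_extensionality => mu.
apply: functional_extensionality => e; apply: eq_bigr => l _.
congr lcoef; apply: phi_Pr_lmul_const (hG l).
by case: l => [j|]; rewrite ?hexp_order_some ?hexp_order_none.
Qed.

Lemma horizontal_local (G : bcomp K n) mu e :
  dser mu (G mu) e + act lam (hB K n) G mu e = 0 ->
  local_op mu (G mu) e = pp_correction G mu e.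
Proof. by rewrite /act => /eqP; rewrite addrA subr_eq0 => /eqP. Qed.

End ExpansionOfH.

Lemma rec_unique (R : idomainType) (c A a a' : nat -> R) :
  (forall k, c k != 0) -> a 0%N = a' 0%N ->
  (forall k, c k * a k.+1 + \sum_(i < k.+1) A i * a (k - i)%N
           = c k * a' k.+1 + \sum_(i < k.+1) A i * a' (k - i)%N) ->
  a = a'.
Proof.
move=> c_neq0 eq0 eq_rec.
suff eq_upto k m : (m <= k)%N -> a m = a' m.
  by apply: functional_extensionality => m; exact: (eq_upto m).
elim: k m => [|k IH] m; first by rewrite leqn0 => /eqP ->.
rewrite leq_eqVlt => /orP[/eqP ->|]; last exact: IH.
have := eq_rec k; under eq_bigr => i _ do rewrite IH ?leq_subr //.
by move/addIr/(mulfI (c_neq0 k)).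
Qed.

(* A field with a multiplicative map to Q under which some integer has size
   in (0, 1) has characteristic 0: otherwise Frobenius would fix that integer
   while strictly decreasing its size. *)
Lemma char0_of_abs (F : fieldType) (abs : F -> rat) (m : nat) :
  (forall x y, abs (x * y) = abs x * abs y) -> 0 < abs m%:R < 1 ->
  forall k : nat, (k%:R == 0 :> F) = (k == 0)%N.
Proof.
move=> abs_mul /andP[abs_gt0 abs_lt1]; apply/pcharf0P => q.
apply/negbTE/negP => char_q.
have q_gt1 : (1 < q)%N := prime_gt1 (pcharf_prime char_q).
have abs_exp k : abs (m%:R ^+ k.+1) = abs m%:R ^+ k.+1.
  by elim: k => [|k IH]; rewrite ?expr1 // exprS abs_mul IH -exprS.
have := abs_exp q.-1; rewrite prednK ?(ltnW q_gt1) //.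
rewrite -(pFrobenius_autE char_q) pFrobenius_aut_nat => abs_fix.
by move: (ltr_iXnr q abs_gt0 abs_lt1); rewrite -abs_fix ltxx q_gt1.
Qed.

Section Rigidity.
Variables (K : fieldType) (n : nat) (lam : 'I_n -> K).
Hypothesis char0 : forall m : nat, (m%:R == 0 :> K) = (m == 0)%N.

Lemma natr_char0_inj : injective (fun m : nat => (m%:R : K)).
Proof.
move=> m m'; wlog le_mm' : m m' / (m <= m')%N => [le_inj eq_mm'|].
  by case: (leqP m m') => [|/ltnW] /le_inj; [apply | move/(_ (esym eq_mm'))].
move=> /esym/eqP; rewrite -subr_eq0 -natrB // char0 subn_eq0 => le_m'm.
by apply/eqP; rewrite eqn_leq le_mm'.
Qed.

Lemma dser_eq0_const {mu : pt n} {a : nat -> K} :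
  (forall e, dser mu a e = 0) -> forall k, a k.+1 = 0.
Proof.
have succ_neq0 k : (k.+1%:R : K) != 0 by rewrite char0.
move=> hd k; case: mu hd => [j|] hd.
  by have /eqP := hd (Posz k); rewrite /= mulf_eq0 (negbTE (succ_neq0 k)) => /eqP.
by have /eqP := hd (Posz k.+2); rewrite /= oppr_eq0 mulf_eq0 (negbTE (succ_neq0 k)) => /eqP.
Qed.

Lemma flat_sections_eq (G G' : bcomp K n) :
  G None 0%N = 0 -> G' None 0%N = 0 ->
  (forall mu e, dser mu (G mu) e = 0) -> (forall mu e, dser mu (G' mu) e = 0) ->
  (forall i, G (Some i) 0%N = G' (Some i) 0%N) -> G = G'.
Proof.
move=> h0 h0' hd hd' hP.
apply: functional_extensionality => mu; apply: functional_extensionality => -[|k].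
  by case: mu => [i|]; rewrite ?hP ?h0 ?h0'.
by rewrite (dser_eq0_const (hd mu)) (dser_eq0_const (hd' mu)).
Qed.

Lemma coef_some_neq0 k : (k.+1%:R + 2^-1 : K) != 0.
Proof.
have two_neq0 : (2%:R : K) != 0 by rewrite char0.
apply/eqP => /(congr1 (fun x => 2%:R * x)).
by rewrite mulr0 mulrDr mulfV // -natrM natr1 => /eqP; rewrite char0.
Qed.

Lemma coef_none_neq0 k : odd n -> (2^-1 *+ n - k.+1%:R : K) != 0.
Proof.
move=> odd_n; have two_neq0 : (2%:R : K) != 0 by rewrite char0.
apply/eqP => /(congr1 (fun x => 2%:R * x)).
rewrite mulr0 mulrBr mulrnAr mulfV // -natrM => /eqP; rewrite subr_eq0 => /eqP.
by move/natr_char0_inj => n_even; rewrite n_even oddM in odd_n.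
Qed.

Lemma horizontal_sections_eq (G G' : bcomp K n) : odd n ->
  G None 0%N = 0 -> G' None 0%N = 0 ->
  (forall mu e, dser mu (G mu) e + act lam (hB K n) G mu e = 0) ->
  (forall mu e, dser mu (G' mu) e + act lam (hB K n) G' mu e = 0) ->
  (forall i, G (Some i) 0%N = G' (Some i) 0%N) -> G = G'.
Proof.
move=> odd_n h0 h0' hE hE' hP.
have hconst l : G l 0%N = G' l 0%N by case: l => [i|]; rewrite ?hP ?h0 ?h0'.
have same_op mu e : local_op lam mu (G mu) e = local_op lam mu (G' mu) e.
  by rewrite !horizontal_local // (pp_correction_const lam hconst).
apply: functional_extensionality => -[j|].
  apply: (rec_unique (A := fun i => (phi lam (Some j) (hB K n)).2 i.+1)
            (@coef_some_neq0) (hconst (Some j))) => k.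
  by rewrite -!local_op_some.
apply: (rec_unique (A := fun i => (phi lam None (hB K n)).2 i.+2)
          (fun k => coef_none_neq0 k odd_n) (hconst None)) => k.
by rewrite -!local_op_none.
Qed.

End Rigidity.

Theorem mainTheorem3 (K : fieldType) (abs : K -> rat) (p g : nat)
  (lam : 'I_(2 * g).+1 -> K) :
  padic_setting abs p ->
  (0 < g)%N ->
  (forall i, inW abs (lam i)) ->
  (forall i j, i != j -> ~ same_red abs p (lam i) (lam j)) ->
  forall G0 G1 G0' G1' : bcomp K ((2 * g).+1),
    inH lam abs G0 G1 -> inH lam abs G0' G1' ->
    (forall i, PhiMap G0 G1 i = PhiMap G0' G1' i) ->
    G0 = G0' /\ G1 = G1'.
Proof.
move=> setting _ _ _ G0 G1 G0' G1' [[_ G0_inf] [_ G1_inf] eqs]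
  [[_ G0'_inf] [_ G1'_inf] eqs'] samePhi.
have char0 : forall m : nat, (m%:R == 0 :> K) = (m == 0)%N.
  have [[p_prime _] [_ [_ [abs_mul [_ [abs_p _]]]]]] := setting.
  have p_gt1 : (1 < p%:R :> rat) by rewrite ltr1n prime_gt1.
  apply: (char0_of_abs abs_mul (m := p)).
  by rewrite abs_p invr_gt0 invf_lt1 ?p_gt1 ?(lt_trans ltr01 p_gt1).
have odd_n : odd (2 * g).+1 by rewrite /= oddM.
split.
  apply: (flat_sections_eq char0 G0_inf G0'_inf) => [mu e|mu e|i].
  - exact: (eqs mu e).1.
  - exact: (eqs' mu e).1.
  - by case: (samePhi i).
apply: (horizontal_sections_eq char0 odd_n G1_inf G1'_inf) => [mu e|mu e|i].
- exact: (eqs mu e).2.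
- exact: (eqs' mu e).2.
- by case: (samePhi i).
Qed.
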